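(* Let $R$ be a commutative ring and $n\ge 1$. Then ${\rm E}_{\psi_n}(R)={\rm E}_{2n-1}(R)$.
   Context: All rings are commutative with identity. ${\rm E}_m(R)$ is the subgroup of ${\rm SL}_m(R)$ generated by the elementary matrices $E_{ij}(\lambda)=I_m+\lambda e_{ij}$, $i\ne j$, $\lambda\in R$, where $e_{ij}$ is the matrix unit. $\psi_n=\sum_{i=1}^n e_{2i-1,2i}-\sum_{i=1}^n e_{2i,2i-1}$ is the standard $2n\times 2n$ symplectic (alternating) matrix. Elements of $R^m$ are row vectors, ${}^t$ is transpose. For an invertible alternating $2n\times2n$ matrix $\varphi$ (alternating means of the form $\nu-\nu^t$), write $\varphi=\begin{pmatrix}0&-c\\ c^t&\nu\end{pmatrix}$, $\varphi^{-1}=\begin{pmatrix}0&d\\ -d^t&\mu\end{pmatrix}$ with $c,d\in R^{2n-1}$, and set $\alpha_\varphi(v)=I_{2n-1}+d^tv\nu$, $\beta_\varphi(v)=I_{2n-1}+\mu v^tc$ for $v\in R^{2n-1}$. ${\rm E}_\varphi(R)$ is the subgroup of ${\rm GL}_{2n-1}(R)$ generated by all $\alpha_\varphi(v),\beta_\varphi(v)$, $v\in R^{2n-1}$. *)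

From HB Require Import structures.
From mathcomp Require Import all_boot all_order all_algebra.
Set Implicit Arguments. Unset Strict Implicit. Unset Printing Implicit Defensive.
Import GRing.Theory.
Local Open Scope ring_scope.

Inductive gen_subgroup (R : comPzRingType) (k : nat) (S : 'M[R]_k -> Prop)
  : 'M[R]_k -> Prop :=
| gen_one : gen_subgroup S 1%:M
| gen_mul g A : S g -> gen_subgroup S A -> gen_subgroup S (g *m A)
| gen_inv g h A : S g -> g *m h = 1%:M -> h *m g = 1%:M ->
    gen_subgroup S A -> gen_subgroup S (h *m A).

Definition elem_mx (R : comPzRingType) (k : nat) (i j : 'I_k) (l : R)
  : 'M[R]_k := 1%:M + l *: delta_mx i j.

Definition elem_gens (R : comPzRingType) (k : nat) (M : 'M[R]_k) : Prop :=
  exists (i j : 'I_k) (l : R), i != j /\ M = elem_mx i j l.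

Definition E_mx (R : comPzRingType) (k : nat) : 'M[R]_k -> Prop :=
  gen_subgroup (@elem_gens R k).

(* The standard symplectic matrix psi_n, of size 2n, written with size
   1 + m where m = 2n - 1 (valid when n >= 1).  Indices are 0-based:
   the paper's e_{2i-1,2i} is entry (even r, r+1). *)
Definition psi_mx (R : comPzRingType) (n : nat) : 'M[R]_(1 + (n.*2).-1) :=
  \matrix_(r, s)
    (if ~~ odd r && (s == r.+1 :> nat) then 1
     else if odd r && (s.+1 == r :> nat) then -1 else 0).

Section Ephi.
Variables (R : comPzRingType) (m : nat).
Variables (phi phiinv : 'M[R]_(1 + m)).
(* phi = [[0, -c], [c^t, nu]],  phi^{-1} = [[0, d], [-d^t, mu]] *)
Definition phi_c : 'rV[R]_m := - ursubmx phi.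
Definition phi_nu : 'M[R]_m := drsubmx phi.
Definition phi_d : 'rV[R]_m := ursubmx phiinv.
Definition phi_mu : 'M[R]_m := drsubmx phiinv.
Definition alpha_phi (v : 'rV[R]_m) : 'M[R]_m :=
  1%:M + (phi_d)^T *m v *m phi_nu.
Definition beta_phi (v : 'rV[R]_m) : 'M[R]_m :=
  1%:M + phi_mu *m v^T *m phi_c.
Definition Ephi_gens (M : 'M[R]_m) : Prop :=
  exists v, M = alpha_phi v \/ M = beta_phi v.
Definition E_phi : 'M[R]_m -> Prop := gen_subgroup Ephi_gens.
End Ephi.

From HB Require Import structures.
From mathcomp Require Import all_boot all_order all_algebra.
Set Implicit Arguments. Unset Strict Implicit.
Import GRing.Theory.
Local Open Scope ring_scope.

(* Since psi^2 = -1, psi^-1 = -psi, so c = -d is the first unit vector and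
   mu = -nu; hence alpha_psi(v) and beta_psi(v) are the transvections
   I + e^t w and I + w^t e along the first row and column, with w = -v nu.
   The first column of nu vanishes and nu^2 = -1 off the first coordinate, so
   w ranges over exactly the row vectors with w_1 = 0.  Such transvections are
   products of the E_1j(l) and E_j1(l), which in turn generate E_{2n-1}(R)
   through the commutator identity [E_i1(l), E_1j(1)] = E_ij(l). *)

Section GenSubgroup.
Variables (R : comPzRingType) (k : nat).
Implicit Types (S : 'M[R]_k -> Prop) (A B g : 'M[R]_k).

Lemma gen_subgroup_mul S A B :
  gen_subgroup S A -> gen_subgroup S B -> gen_subgroup S (A *m B).
Proof.
elim=> [|g A' Sg _ IH|g h A' Sg gh hg _ IH] SB; first by rewrite mul1mx.
- by rewrite -mulmxA; apply: gen_mul => //; exact: IH.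
- by rewrite -mulmxA; apply: (gen_inv Sg gh hg); exact: IH.
Qed.

Lemma gen_subgroup_gen S g : S g -> gen_subgroup S g.
Proof. by move=> Sg; rewrite -[g]mulmx1; apply: gen_mul => //; exact: gen_one. Qed.

Lemma gen_subgroup_inv S g h :
  S g -> g *m h = 1%:M -> h *m g = 1%:M -> gen_subgroup S h.
Proof. by move=> Sg gh hg; rewrite -[h]mulmx1; apply: (gen_inv Sg gh hg); exact: gen_one. Qed.

Lemma gen_subgroup_sub S S' :
  (forall g, S g -> gen_subgroup S' g) ->
  (forall g, S g -> exists2 g', S g' & g *m g' = 1%:M) ->
  forall A, gen_subgroup S A -> gen_subgroup S' A.
Proof.
move=> SS' Sinv A; elim=> [|g A' Sg _ IH|g h A' Sg _ hg _ IH]; first exact: gen_one.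
  by apply: gen_subgroup_mul IH; exact: SS'.
have [g' Sg' gg'] := Sinv g Sg.
have ->: h = g' by rewrite -[h]mulmx1 -gg' mulmxA hg mul1mx.
by apply: gen_subgroup_mul IH; exact: SS'.
Qed.

Lemma gen_subgroup_tr S A :
  (forall g, S g -> S g^T) -> gen_subgroup S A -> gen_subgroup S A^T.
Proof.
move=> Str; elim=> [|g A' Sg _ IH|g h A' Sg gh hg _ IH]; first by rewrite trmx1; exact: gen_one.
  by rewrite trmx_mul; apply: gen_subgroup_mul IH _; apply: gen_subgroup_gen; exact: Str.
rewrite trmx_mul; apply: gen_subgroup_mul IH _.
by apply: (gen_subgroup_inv (Str g Sg)); rewrite -trmx_mul ?hg ?gh trmx1.
Qed.

End GenSubgroup.

Section Transvections.
Variables (R : comPzRingType) (k : nat).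
Implicit Types (i j p : 'I_k) (l : R) (w : 'rV[R]_k).

Definition row_transv i w : 'M[R]_k := 1%:M + (delta_mx i 0 : 'cV_k) *m w.
Definition col_transv i w : 'M[R]_k := 1%:M + w^T *m (delta_mx 0 i : 'rV_k).

Lemma tr_row_transv i w : (row_transv i w)^T = col_transv i w.
Proof. by rewrite /row_transv linearD /= trmx1 trmx_mul trmx_delta. Qed.

Lemma row_transvD i w w' : w 0 i = 0 ->
  row_transv i w *m row_transv i w' = row_transv i (w + w').
Proof.
move=> wi; have w_i : w *m (delta_mx i 0 : 'cV_k) = 0.
  by rewrite -colE; apply/matrixP => a b; rewrite !ord1 !mxE wi.
by rewrite /row_transv mulmxDl mul1mx mulmxDr mulmx1 -mulmxA (mulmxA w) w_i
  mul0mx mulmx0 addr0 mulmxDr addrA addrAC.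
Qed.

Lemma row_transvN i w : w 0 i = 0 -> row_transv i w *m row_transv i (- w) = 1%:M.
Proof. by move=> wi; rewrite row_transvD // subrr /row_transv mulmx0 addr0. Qed.

Lemma col_transvN i w : w 0 i = 0 -> col_transv i w *m col_transv i (- w) = 1%:M.
Proof.
move=> wi; rewrite -!tr_row_transv -trmx_mul row_transvD; last by rewrite mxE wi oppr0.
by rewrite addNr /row_transv mulmx0 addr0 trmx1.
Qed.

Lemma row_transv_delta i j l : row_transv i (l *: delta_mx 0 j) = elem_mx i j l.
Proof. by rewrite /row_transv -scalemxAr mul_delta_mx. Qed.

Lemma col_transv_delta i j l : col_transv j (l *: delta_mx 0 i) = elem_mx i j l.
Proof. by rewrite -tr_row_transv row_transv_delta /elem_mx linearD /= trmx1 linearZ /= trmx_delta. Qed.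

Lemma elem_mxN i j l : i != j -> elem_mx i j l *m elem_mx i j (- l) = 1%:M.
Proof.
move=> ij; rewrite -!row_transv_delta scaleNr row_transvN //.
by rewrite !mxE eqxx /= (negbTE ij) mulr0.
Qed.

Lemma E_mx_elem i j l : i != j -> E_mx (elem_mx i j l).
Proof. by move=> ij; apply: gen_subgroup_gen; exists i, j, l. Qed.

Lemma E_mx_tr (A : 'M[R]_k) : E_mx A -> E_mx A^T.
Proof.
apply: gen_subgroup_tr => _ [i [j [l [ij ->]]]]; exists j, i, l; split; first by rewrite eq_sym.
by rewrite /elem_mx linearD /= trmx1 linearZ /= trmx_delta.
Qed.

Lemma E_mx_row_transv i w : w 0 i = 0 -> E_mx (row_transv i w).
Proof.
move=> wi; have -> : w = \sum_(j | j != i) w 0 j *: delta_mx 0 j.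
  by rewrite {1}[w]row_sum_delta (bigD1 i) //= wi scale0r add0r.
pose P w' := w' 0 i = 0 /\ E_mx (row_transv i w').
suff [] : P (\sum_(j | j != i) w 0 j *: delta_mx 0 j) by [].
apply: big_ind => [|w1 w2 [w1i E1] [w2i E2]|j ji].
- by split; [rewrite mxE | rewrite /row_transv mulmx0 addr0; exact: gen_one].
- split; first by rewrite mxE w1i w2i addr0.
  by rewrite -row_transvD //; exact: gen_subgroup_mul.
- split; first by rewrite !mxE eqxx /= eq_sym (negbTE ji) mulr0.
  by rewrite row_transv_delta; apply: E_mx_elem; rewrite eq_sym.
Qed.

Lemma E_mx_col_transv i w : w 0 i = 0 -> E_mx (col_transv i w).
Proof. by move=> wi; rewrite -tr_row_transv; apply: E_mx_tr; exact: E_mx_row_transv. Qed.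

Lemma elem_mx_commutator i j p l : i != p -> j != p -> i != j ->
  elem_mx i p l *m elem_mx p j 1 *m elem_mx i p (- l) *m elem_mx p j (-1)
  = elem_mx i j l.
Proof.
move=> ip jp ij.
have e1 : elem_mx i p l *m elem_mx p j 1 = elem_mx i p l + delta_mx p j + l *: delta_mx i j.
  rewrite /elem_mx mulmxDl !mulmxDr !mul1mx !mulmx1 -scalemxAl -scalemxAr mul_delta_mx !scale1r.
  by rewrite addrA [1%:M + _ + l *: delta_mx i p]addrAC.
have e2 : (elem_mx i p l + delta_mx p j + l *: delta_mx i j) *m elem_mx i p (- l)
   = 1%:M + delta_mx p j + l *: delta_mx i j.
  rewrite /elem_mx !mulmxDl !mulmxDr !mul1mx !mulmx1 -!scalemxAl -!scalemxAr !mul_delta_mx_cond.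
  rewrite !(eq_sym _ i) (negbTE ip) (negbTE ij) /= !mulr0n !scaler0 !addr0.
  by rewrite scaleNr addrNK.
rewrite e1 e2 /elem_mx !mulmxDl !mulmxDr !mul1mx !mulmx1 -!scalemxAl -!scalemxAr !mul_delta_mx_cond.
by rewrite (negbTE jp) /= !mulr0n !scaler0 !addr0 scaleN1r addrNK.
Qed.

Lemma gen_subgroup_elem_pivot (S : 'M[R]_k -> Prop) p :
  (forall j l, j != p -> gen_subgroup S (elem_mx p j l) /\ gen_subgroup S (elem_mx j p l)) ->
  forall i j l, i != j -> gen_subgroup S (elem_mx i j l).
Proof.
move=> Sp i j l; case: (eqVneq i p) => [-> pj | ip]; first by apply: (Sp j l _).1; rewrite eq_sym.
case: (eqVneq j p) => [-> | jp ij]; first by move=> _; exact: (Sp i l ip).2.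
rewrite -(elem_mx_commutator l ip jp ij).
apply: gen_subgroup_mul; last exact: (Sp j _ jp).1.
apply: gen_subgroup_mul; last exact: (Sp i _ ip).2.
by apply: gen_subgroup_mul; [exact: (Sp i _ ip).2 | exact: (Sp j _ jp).1].
Qed.

End Transvections.

Section StandardAlternating.
Variables (R : comPzRingType) (m : nat) (phi phiinv : 'M[R]_(1 + m.+1)).
Hypothesis phi_tr : phi^T = - phi.
Hypothesis phi_sq : phi *m phi = - 1%:M.
Hypothesis phi_ul : ulsubmx phi = 0.
Hypothesis phi_ur : ursubmx phi = delta_mx 0 0.
Hypothesis phiinv_phi : phiinv *m phi = 1%:M.

Implicit Types (v : 'rV[R]_m.+1) (M : 'M[R]_m.+1).
Local Notation nu := (phi_nu phi).

Lemma phiinv_eq : phiinv = - phi.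
Proof. by rewrite -[phiinv]mulmx1 -[1%:M]opprK -phi_sq -mulmxN mulmxA phiinv_phi mul1mx. Qed.

Lemma phi_dl : dlsubmx phi = - (delta_mx 0 0 : 'rV_m.+1)^T.
Proof.
by rewrite -phi_ur trmx_ursub phi_tr; apply/matrixP => a b; rewrite !mxE opprK.
Qed.

Lemma nu_tr : nu^T = - nu.
Proof. by rewrite trmx_drsub phi_tr; apply/matrixP => a b; rewrite !mxE. Qed.

Lemma mulmx_nu_col0 v : (v *m nu) 0 0 = 0.
Proof.
have nu_col0 : nu *m (delta_mx 0 0 : 'rV_m.+1)^T = 0.
  have := congr1 dlsubmx phi_sq; rewrite -{1 2}[phi]submxK mulmx_block block_mxKdl.
  rewrite phi_ul phi_dl mulmx0 add0r mulmxN scalar_mx_block opp_block_mx block_mxKdl oppr0.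
  by move/eqP; rewrite oppr_eq0 => /eqP.
have -> : (v *m nu) 0 0 = (v *m nu *m (delta_mx 0 0 : 'rV_m.+1)^T) 0 0.
  by rewrite trmx_delta -colE [RHS]mxE.
by rewrite -mulmxA nu_col0 mulmx0 mxE.
Qed.

Lemma delta_mx_mul_nu_sq (j : 'I_m.+1) : j != 0 ->
  (delta_mx 0 j : 'rV_m.+1) *m nu *m nu = - delta_mx 0 j.
Proof.
move=> j0; have := congr1 drsubmx phi_sq; rewrite -{1 2}[phi]submxK mulmx_block block_mxKdr.
rewrite phi_ur phi_dl mulNmx trmx_delta mul_delta_mx scalar_mx_block opp_block_mx block_mxKdr.
rewrite -mulmxA /phi_nu; move/(canRL (addKr _)) ->.
by rewrite opprK mulmxBr mulmx1 mul_delta_mx_cond (negbTE j0) mulr0n sub0r.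
Qed.

Lemma alpha_phiE v : alpha_phi phi phiinv v = row_transv 0 (- (v *m nu)).
Proof.
have ursubN : ursubmx (- phi) = - delta_mx 0 0.
  by rewrite -phi_ur; apply/matrixP => a b; rewrite !mxE.
by rewrite /alpha_phi /phi_d phiinv_eq ursubN linearN /= trmx_delta !mulNmx
  /row_transv mulmxN mulmxA.
Qed.

Lemma beta_phiE v : beta_phi phi phiinv v = col_transv 0 (- (v *m nu)).
Proof.
have drsubN : drsubmx (- phi) = - nu by apply/matrixP => a b; rewrite !mxE.
rewrite /beta_phi /phi_mu /phi_c phiinv_eq drsubN phi_ur /col_transv.
by rewrite [in RHS]linearN /= trmx_mul nu_tr !(mulNmx, mulmxN, opprK).
Qed.

Lemma E_phi_eq_E_mx M : E_phi phi phiinv M <-> E_mx M.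
Proof.
have vnu_0 v : (- (v *m nu)) 0 0 = 0 by rewrite mxE mulmx_nu_col0 oppr0.
split; apply: gen_subgroup_sub.
- move=> _ [v [->|->]]; [rewrite alpha_phiE | rewrite beta_phiE].
    exact: E_mx_row_transv.
  exact: E_mx_col_transv.
- move=> _ [v [->|->]].
    exists (alpha_phi phi phiinv (- v)); first by exists (- v); left.
    by rewrite !alpha_phiE mulNmx row_transvN.
  exists (beta_phi phi phiinv (- v)); first by exists (- v); right.
  by rewrite !beta_phiE mulNmx col_transvN.
- move=> _ [i [j [l [ij ->]]]]; apply: (gen_subgroup_elem_pivot (p := 0)) ij => {}j {}l j0.
  pose v := l *: ((delta_mx 0 j : 'rV_m.+1) *m nu).
  have vE : - (v *m nu) = l *: delta_mx 0 j.
    by rewrite /v -scalemxAl delta_mx_mul_nu_sq // scalerN opprK.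
  split; apply: gen_subgroup_gen; exists v; [left | right].
    by rewrite alpha_phiE vE row_transv_delta.
  by rewrite beta_phiE vE col_transv_delta.
- move=> _ [i [j [l [ij ->]]]]; exists (elem_mx i j (- l)); first by exists i, j, (- l).
  exact: elem_mxN.
Qed.

End StandardAlternating.

Definition partner (r : nat) : nat := if odd r then r.-1 else r.+1.

Lemma partnerK : involutive partner.
Proof. by case=> [|r]; rewrite /partner //=; case: (boolP (odd r)) => [|/negPf] /= ->. Qed.

Lemma odd_partner r : odd (partner r) = ~~ odd r.
Proof. by rewrite /partner; case: r => [|r] //=; case: (boolP (odd r)) => [|/negPf] /= ->. Qed.

Lemma partner_lt n r : (r < n.*2)%N -> (partner r < n.*2)%N.
Proof.
rewrite /partner; case: ifP => [_ | even_r lt_r]; first exact: leq_ltn_trans (leq_pred r).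
rewrite ltn_neqAle lt_r andbT; apply: contraFneq even_r => r_eq.
by rewrite -[odd r]negbK -/(odd r.+1) r_eq odd_double.
Qed.

Section Psi.
Variable R : comPzRingType.

Lemma psi_mxE n r s : psi_mx R n r s = (-1) ^+ odd r *+ (s == partner r :> nat).
Proof.
rewrite mxE /partner mulrb; case: (nat_of_ord r) => [|r'] /=; first by rewrite expr0.
by case: (odd r') => /=; rewrite ?eqSS ?expr0 ?expr1.
Qed.

Lemma psi_tr n : (psi_mx R n)^T = - psi_mx R n.
Proof.
apply/matrixP => r s; rewrite [LHS]mxE [RHS]mxE !psi_mxE.
have -> : (nat_of_ord r == partner s) = (nat_of_ord s == partner r).
  by apply/eqP/eqP => ->; rewrite partnerK.
case: eqP => [->|_]; last by rewrite mulr0n oppr0.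
by rewrite odd_partner; case: (odd r); rewrite ?expr0 ?expr1 ?opprK.
Qed.

Lemma sum_mulrn_eqn N (F : 'I_N.+1 -> R) (a : R) x : (x <= N)%N ->
  \sum_(t < N.+1) a *+ (t == x :> nat) * F t = a * F (inord x).
Proof.
move=> le_xN; rewrite (bigD1 (inord x)) //= big1 ?inordK ?eqxx ?mulr1n ?addr0 // => t.
by rewrite -val_eqE /= inordK // => /negPf ->; rewrite mulr0n mul0r.
Qed.

Lemma psi_sq k : psi_mx R k.+1 *m psi_mx R k.+1 = - 1%:M.
Proof.
apply/matrixP => r s; rewrite mxE [RHS]mxE.
under eq_bigr do rewrite psi_mxE.
rewrite sum_mulrn_eqn; last by rewrite -ltnS; exact: (@partner_lt k.+1 r (ltn_ord r)).
rewrite psi_mxE inordK; last exact: (@partner_lt k.+1 r (ltn_ord r)).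
rewrite odd_partner partnerK mulrnAr.
have -> : (-1) ^+ odd r * (-1) ^+ (~~ odd r) = -1 :> R by case: (odd r); rewrite /= ?mulr1 ?mul1r.
by rewrite mulNrn mxE eq_sym.
Qed.

Lemma psi_ul k : ulsubmx (psi_mx R k) = 0.
Proof. by apply/matrixP => a b; rewrite !mxE !ord1. Qed.

Lemma psi_ur k : ursubmx (psi_mx R k.+1) = delta_mx 0 0.
Proof.
by apply/matrixP => a j; rewrite (ord1 a) !mxE /= add1n eqSS -val_eqE; case: eqP.
Qed.

End Psi.

Theorem lemma3p9 (R : comPzRingType) (n : nat) (hn : (0 < n)%N)
  (psiinv : 'M[R]_(1 + (n.*2).-1))
  (hinv : psi_mx R n *m psiinv = 1%:M) (hinv' : psiinv *m psi_mx R n = 1%:M) :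
  forall M : 'M[R]_((n.*2).-1),
    E_phi (psi_mx R n) psiinv M <-> E_mx M.
Proof.
case: n hn psiinv hinv hinv' => // k _ psiinv _ hinv'.
exact: (E_phi_eq_E_mx (m := k.*2) (psi_tr R k.+1) (psi_sq R k) (psi_ul R k.+1) (psi_ur R k) hinv').
Qed.
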